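(* Let $R$ be a tolerance relation on $\{1,\ldots,n\}$ and $A=A(R)$. For $x\in M_n(\mathbb{C})$ let $\varphi_x:M_n(\mathbb{C})\to\mathbb{C}$, $\varphi_x(a):=\mathrm{Tr}(x^*a)$. Then the map $(A,\succeq)\to(A^*,\geq)$ sending $x\in A$ to $\varphi_x|_A$ is an isomorphism of ordered vector spaces (i.e. an isomorphism of the underlying real vector spaces such that $x\succeq 0$ if and only if $\varphi_x|_A\ge 0$).
   Context: A tolerance relation on a set $X$ is a reflexive and symmetric relation. $T:M_n(\mathbb{C})\to M_n(\mathbb{C})$ is $T(b)=\sum_{(i,j)\in R}E_{ii}bE_{jj}$ (setting entries in positions $(i,j)\notin R$ to zero) and $A(R)=T(M_n(\mathbb{C}))$, the matrices vanishing outside $R$. For $a\in A(R)$, $a\succeq 0$ means $a=T(b)$ for some positive semidefinite $b\in M_n(\mathbb{C})$. $A^*$ is the dual space of $A$, ordered by: $\varphi\ge0$ iff $\varphi(a)\ge 0$ for every positive semidefinite matrix $a\in A$. *)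

From HB Require Import structures.
From mathcomp Require Import all_boot all_order all_algebra.
From mathcomp Require Import complex.
From mathcomp Require Import reals.
Set Implicit Arguments. Unset Strict Implicit. Unset Printing Implicit Defensive.
Import Order.TTheory GRing.Theory Num.Theory.
Local Open Scope ring_scope.

Section Defs.
Variable (R : realType) (n : nat).
Local Notation C := (R[i]).

Definition adjmx m p (x : 'M[C]_(m, p)) : 'M[C]_(p, m) := (map_mx Num.conj x)^T.

Definition psd (b : 'M[C]_n) : Prop :=
  adjmx b = b /\ forall v : 'cV[C]_n, 0 <= (adjmx v *m b *m v) 0 0.

Definition tolerance (Rel : rel 'I_n) : Prop := reflexive Rel /\ symmetric Rel.

(* T(b) = sum_{(i,j) in R} E_ii b E_jj *)
Definition Tmap (Rel : rel 'I_n) (b : 'M[C]_n) : 'M[C]_n :=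
  \matrix_(i, j) (if Rel i j then b i j else 0).

(* membership in A(R) = T(M_n(C)): matrices vanishing outside R *)
Definition inA (Rel : rel 'I_n) (a : 'M[C]_n) : Prop :=
  forall i j, ~~ Rel i j -> a i j = 0.

Definition succeq0 (Rel : rel 'I_n) (a : 'M[C]_n) : Prop :=
  exists2 b, psd b & a = Tmap Rel b.

Definition phi (x : 'M[C]_n) (a : 'M[C]_n) : C := \tr (adjmx x *m a).

(* psi (defined on M_n, considered on A) is an element of A^*, i.e. its
   restriction to A is C-linear *)
Definition dual_lin (Rel : rel 'I_n) (psi : 'M[C]_n -> C) : Prop :=
  forall (c : C) a b, inA Rel a -> inA Rel b ->
    psi (c *: a + b) = c * psi a + psi b.

Definition dual_ge0 (Rel : rel 'I_n) (psi : 'M[C]_n -> C) : Prop :=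
  forall a, inA Rel a -> psd a -> 0 <= psi a.

End Defs.

(* If x = T(b) with b psd, then phi_x(a) = Tr(b a) >= 0 for every psd a in A,
   as one sees by diagonalizing a.  Conversely, let phi_x >= 0 on the psd
   matrices of A.  Testing against rank-one matrices supported on pairs in R
   shows that x is hermitian.  Let T(b0) be a point of the cone T(psd) nearest
   to x in the Hilbert-Schmidt norm; it exists because T keeps the diagonal
   (R is reflexive), and the diagonal of a psd matrix bounds all its entries.
   Moving b0 along v v^* and along the ray through b0 shows that
   d = T(b0) - x is psd and orthogonal to T(b0); hence |d|^2 = - Re phi_x(d),
   which is <= 0, so x = T(b0).  Linearity and bijectivity are checked on the
   matrix units E_ij with (i,j) in R. *)

From mathcomp Require Import all_boot all_order all_algebra.
From mathcomp Require Import complex reals spectral.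
From mathcomp Require Import ring lra.
From mathcomp Require Import boolp classical_sets topology normedtype.
From mathcomp Require Import matrix_normedtype derive.
Import Order.TTheory GRing.Theory Num.Theory.
Import numFieldTopology.Exports numFieldNormedType.Exports.
Set Implicit Arguments. Unset Strict Implicit. Unset Printing Implicit Defensive.
Local Open Scope classical_set_scope.
Local Open Scope ring_scope.

Notation Re := (@complex.Re _).
Notation Im := (@complex.Im _).

Section Complex.
Variable R : realType.
Implicit Types z w : R[i].

Lemma complexReD z w : Re (z + w) = Re z + Re w. Proof. by case: z; case: w. Qed.
Lemma complexImD z w : Im (z + w) = Im z + Im w. Proof. by case: z; case: w. Qed.
Lemma complexReN z : Re (- z) = - Re z. Proof. by case: z. Qed.
Lemma complexReM z w : Re (z * w) = Re z * Re w - Im z * Im w.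
Proof. by case: z; case: w. Qed.
Lemma complexImM z w : Im (z * w) = Re z * Im w + Im z * Re w.
Proof. by case: z => a b; case: w => c d /=. Qed.
Lemma complexReJ z : Re z^* = Re z. Proof. by case: z. Qed.
Lemma complexImJ z : Im z^* = - Im z. Proof. by case: z. Qed.

Lemma complexP z w : Re z = Re w -> Im z = Im w -> z = w.
Proof. by case: z; case: w => /= ? ? ? ? -> ->. Qed.

Lemma complex_ge0E z : (0 <= z) = (Im z == 0) && (0 <= Re z).
Proof. by rewrite lecE eq_sym. Qed.

Lemma complexRe_sum (I : Type) (s : seq I) (P : pred I) (F : I -> R[i]) :
  Re (\sum_(i <- s | P i) F i) = \sum_(i <- s | P i) Re (F i).
Proof. by elim/big_rec2: _ => // i y1 y2 _ <-; rewrite complexReD. Qed.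

End Complex.

Section Adjoint.
Variable R : realType.
Local Notation C := R[i].

Lemma adjmxE m p (x : 'M[C]_(m, p)) i j : adjmx x i j = (x j i)^*.
Proof. by rewrite !mxE. Qed.

Lemma adjmxK m p (x : 'M[C]_(m, p)) : adjmx (adjmx x) = x.
Proof. by apply/matrixP => i j; rewrite !adjmxE conjCK. Qed.

Lemma adjmxD m p (x y : 'M[C]_(m, p)) : adjmx (x + y) = adjmx x + adjmx y.
Proof. by apply/matrixP => i j; rewrite [RHS]mxE !adjmxE mxE rmorphD. Qed.

Lemma adjmxN m p (x : 'M[C]_(m, p)) : adjmx (- x) = - adjmx x.
Proof. by apply/matrixP => i j; rewrite [RHS]mxE !adjmxE mxE rmorphN. Qed.

Lemma adjmxZ m p c (x : 'M[C]_(m, p)) : adjmx (c *: x) = c^* *: adjmx x.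
Proof. by apply/matrixP => i j; rewrite [RHS]mxE !adjmxE mxE rmorphM. Qed.

Lemma adjmxM m p r (x : 'M[C]_(m, p)) (y : 'M[C]_(p, r)) :
  adjmx (x *m y) = adjmx y *m adjmx x.
Proof. by rewrite /adjmx map_mxM trmx_mul. Qed.

Lemma mxtrace_adj n (x : 'M[C]_n) : \tr (adjmx x) = (\tr x)^*.
Proof. by rewrite /mxtrace rmorph_sum; apply: eq_bigr => i _; rewrite adjmxE. Qed.

End Adjoint.

Section Pairing.
Variables (R : realType) (n : nat).
Local Notation C := R[i].
Implicit Types x y a b d m K : 'M[C]_n.

Lemma phiE x a : phi x a = \sum_i \sum_j (x i j)^* * a i j.
Proof.
rewrite /phi /mxtrace exchange_big; apply: eq_bigr => j _.
by rewrite mxE; apply: eq_bigr => i _; rewrite adjmxE.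
Qed.

Lemma phiC x a : phi a x = (phi x a)^*.
Proof. by rewrite /phi -mxtrace_adj adjmxM adjmxK. Qed.

Lemma phiDl x y a : phi (x + y) a = phi x a + phi y a.
Proof. by rewrite /phi adjmxD mulmxDl mxtraceD. Qed.

Lemma phiZl c x a : phi (c *: x) a = c^* * phi x a.
Proof. by rewrite /phi adjmxZ -scalemxAl mxtraceZ. Qed.

Lemma phiNl x a : phi (- x) a = - phi x a.
Proof. by rewrite /phi adjmxN mulNmx linearN. Qed.

Lemma phiDr x a b : phi x (a + b) = phi x a + phi x b.
Proof. by rewrite /phi mulmxDr mxtraceD. Qed.

Lemma phiZr c x a : phi x (c *: a) = c * phi x a.
Proof. by rewrite /phi -scalemxAr mxtraceZ. Qed.

Lemma phiNr x a : phi x (- a) = - phi x a.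
Proof. by rewrite /phi mulmxN linearN. Qed.

Lemma phi_delta x i j : phi x (delta_mx i j) = (x i j)^*.
Proof.
rewrite phiE (bigD1 i) //= (bigD1 j) //= !mxE !eqxx mulr1.
rewrite big1 ?addr0 => [|k /negbTE kj]; last by rewrite mxE eqxx kj mulr0.
rewrite big1 ?addr0 // => k /negbTE ki; rewrite big1 // => l _.
by rewrite mxE ki mulr0.
Qed.

Definition hsnorm2 (m : 'M[C]_n) : R := Re (phi m m).

Lemma hsnorm2E m : hsnorm2 m = \sum_i \sum_j (Re (m i j) ^+ 2 + Im (m i j) ^+ 2).
Proof.
rewrite /hsnorm2 phiE complexRe_sum; apply: eq_bigr => i _.
rewrite complexRe_sum; apply: eq_bigr => j _.
by rewrite complexReM complexReJ complexImJ; ring.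
Qed.

Lemma hsnorm2_ge0 m : 0 <= hsnorm2 m.
Proof. by rewrite hsnorm2E; do 2!(apply: sumr_ge0 => ? _); rewrite addr_ge0 ?sqr_ge0. Qed.

Lemma hsnorm2_le0 m : hsnorm2 m <= 0 -> m = 0.
Proof.
move=> m_le0; have /eqP : hsnorm2 m = 0 by apply/eqP; rewrite eq_le m_le0 hsnorm2_ge0.
have sq_ge0 (z : C) : 0 <= Re z ^+ 2 + Im z ^+ 2 by rewrite addr_ge0 ?sqr_ge0.
rewrite hsnorm2E psumr_eq0 => [/allP m0|i _]; last exact: sumr_ge0.
apply/matrixP => i j; move: (m0 i (mem_index_enum _)).
rewrite psumr_eq0 // => /allP/(_ j (mem_index_enum _)).
rewrite paddr_eq0 ?sqr_ge0 // !sqrf_eq0 => /andP[/eqP Rij /eqP Iij].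
by rewrite mxE; apply: complexP.
Qed.

Lemma hsnorm2_entry m k l : Re (m k l) ^+ 2 <= hsnorm2 m.
Proof.
have sq_ge0 (z : C) : 0 <= Re z ^+ 2 + Im z ^+ 2 by rewrite addr_ge0 ?sqr_ge0.
rewrite hsnorm2E (bigD1 k) //= (bigD1 l) //= -!addrA lerDl.
by rewrite !addr_ge0 ?sqr_ge0 ?sumr_ge0 // => i _; apply: sumr_ge0.
Qed.

Lemma hsnorm2_line d K (t : R) :
  hsnorm2 (d + t%:C%C *: K) = hsnorm2 d + 2 * t * Re (phi d K) + t ^+ 2 * hsnorm2 K.
Proof.
rewrite /hsnorm2 !(phiDl, phiDr, phiZl, phiZr) (phiC d K) !complexReD.
by rewrite !complexReM !complexReJ !complexImJ /=; ring.
Qed.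

End Pairing.

Section Positivity.
Variables (R : realType) (n : nat).
Local Notation C := R[i].
Implicit Types (a b x : 'M[C]_n) (u v w : 'cV[C]_n).

Definition sesq b u v : C := (adjmx u *m b *m v) 0 0.

Definition dyad w : 'M[C]_n := w *m adjmx w.

Definition unitcv k : 'cV[C]_n := delta_mx k 0.

Lemma sesqDl b u u' v : sesq b (u + u') v = sesq b u v + sesq b u' v.
Proof. by rewrite /sesq adjmxD !mulmxDl mxE. Qed.

Lemma sesqZl b c u v : sesq b (c *: u) v = c^* * sesq b u v.
Proof. by rewrite /sesq adjmxZ -!scalemxAl mxE. Qed.

Lemma sesqDr b u v v' : sesq b u (v + v') = sesq b u v + sesq b u v'.
Proof. by rewrite /sesq mulmxDr mxE. Qed.

Lemma sesqZr b c u v : sesq b u (c *: v) = c * sesq b u v.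
Proof. by rewrite /sesq -scalemxAr mxE. Qed.

Lemma sesqE b u v : sesq b u v = \sum_i \sum_j (u i 0)^* * b i j * v j 0.
Proof.
rewrite /sesq mxE exchange_big; apply: eq_bigr => j _; rewrite mxE big_distrl.
by apply: eq_bigr => i _; rewrite adjmxE.
Qed.

Lemma sesq_unitcv b k l : sesq b (unitcv k) (unitcv l) = b k l.
Proof.
rewrite /sesq; have -> : adjmx (unitcv k) = delta_mx 0 k.
  by apply/matrixP => i j; rewrite adjmxE !mxE rmorph_nat andbC.
by rewrite -rowE -colE !mxE.
Qed.

Lemma sesq_pair b k l c :
  sesq b (unitcv k + c *: unitcv l) (unitcv k + c *: unitcv l) =
  b k k + c * b k l + c^* * b l k + c^* * c * b l l.
Proof.
rewrite !(sesqDl, sesqDr, sesqZl, sesqZr) !sesq_unitcv.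
by rewrite !addrA mulrA.
Qed.

Lemma sesq_adj b v : (sesq b v v)^* = sesq (adjmx b) v v.
Proof. by rewrite /sesq -adjmxE !adjmxM adjmxK mulmxA. Qed.

Lemma phi_dyad x w : phi x (dyad w) = (sesq x w w)^*.
Proof.
rewrite /phi /dyad /sesq mulmxA mxtrace_mulC /mxtrace big_ord1.
by rewrite -adjmxE !adjmxM adjmxK mulmxA.
Qed.

Lemma psd_dyad w : psd (dyad w).
Proof.
split=> [|v]; first by rewrite /dyad adjmxM adjmxK.
rewrite /dyad mulmxA -(mulmxA (adjmx v *m w)) mxE big_ord1.
have -> : (adjmx w *m v) 0 0 = ((adjmx v *m w) 0 0)^*.
  by rewrite -adjmxE adjmxM adjmxK.
exact: mul_conjC_ge0.
Qed.

Lemma psdD a b : psd a -> psd b -> psd (a + b).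
Proof.
move=> [aH a_ge0] [bH b_ge0]; split=> [|v]; first by rewrite adjmxD aH bH.
by rewrite mulmxDr mulmxDl mxE addr_ge0.
Qed.

Lemma psdZ (t : R) b : 0 <= t -> psd b -> psd (t%:C%C *: b).
Proof.
move=> t_ge0 [bH b_ge0]; split=> [|v].
  by rewrite adjmxZ bH; congr (_ *: _); apply: complexP; rewrite /= ?oppr0.
by rewrite -scalemxAr -scalemxAl mxE mulr_ge0 ?lecR.
Qed.

Lemma psd0 : psd (0 : 'M[C]_n).
Proof.
split=> [|v]; last by rewrite mulmx0 mul0mx mxE.
by apply/matrixP => i j; rewrite adjmxE !mxE rmorph0.
Qed.

Lemma psd_herm_Re b :
  adjmx b = b -> (forall v, 0 <= Re (sesq b v v)) -> psd b.
Proof.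
move=> bH b_ge0; split=> // v; rewrite -/(sesq b v v) complex_ge0E b_ge0 andbT.
have := sesq_adj b v; rewrite bH => /(congr1 Im); rewrite complexImJ => ImN.
by apply/eqP; lra.
Qed.

Lemma herm_pair b k l :
  0 <= b k k -> 0 <= b l l ->
  0 <= sesq b (unitcv k + 1 *: unitcv l) (unitcv k + 1 *: unitcv l) ->
  0 <= sesq b (unitcv k + 'i%C *: unitcv l) (unitcv k + 'i%C *: unitcv l) ->
  (b k l)^* = b l k.
Proof.
rewrite !sesq_pair; case: (b k k) => p1 p2; case: (b k l) => q1 q2.
case: (b l k) => r1 r2; case: (b l l) => s1 s2.
rewrite !complex_ge0E /=.
by move=> /andP[/eqP ? _] /andP[/eqP ? _] /andP[/eqP ? _] /andP[/eqP ? _];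
  apply: complexP => /=; lra.
Qed.

Lemma sesq_ge0_psd b : (forall v, 0 <= sesq b v v) -> psd b.
Proof.
move=> b_ge0; split=> //; apply/matrixP => k l; rewrite adjmxE.
by apply: herm_pair; rewrite -?(sesq_unitcv b); apply: b_ge0.
Qed.

Lemma psd_entry_bound b k l : psd b ->
  `|Re (b k l)| <= (Re (b k k) + Re (b l l)) / 2 /\
  `|Im (b k l)| <= (Re (b k k) + Re (b l l)) / 2.
Proof.
move=> [bH b_ge0].
have pair c : 0 <= b k k + c * b k l + c^* * (b k l)^* + c^* * c * b l l.
  by rewrite -adjmxE bH -sesq_pair; apply: b_ge0.
move: (pair 1) (pair (-1)) (pair 'i%C) (pair (- 'i%C)).
case: (b k k) => p p'; case: (b k l) => q q'; case: (b l l) => s s'.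
rewrite !complex_ge0E /= !ler_norml => /andP[_ ?] /andP[_ ?] /andP[_ ?] /andP[_ ?].
by split; apply/andP; split; lra.
Qed.

Lemma psd_diag_ge0 b k : psd b -> 0 <= b k k.
Proof. by case=> _ /(_ (unitcv k)); rewrite -/(sesq b _ _) sesq_unitcv. Qed.

Lemma sesq_conj_row (P b : 'M[C]_n) k :
  (P *m b *m adjmx P) k k = sesq b (adjmx (row k P)) (adjmx (row k P)).
Proof.
rewrite /sesq adjmxK.
transitivity ((row k (P *m b *m adjmx P)) 0 k); first by rewrite !mxE.
rewrite !row_mul [LHS]mxE [RHS]mxE; apply: eq_bigr => l _; congr (_ * _).
by rewrite !adjmxE mxE.
Qed.

(* Diagonalize a = P^* D P with P unitary: phi b a = Tr (P b P^* D) is the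
   sum over k of d_k times the k-th diagonal entry of P b P^*, and both
   factors are values of quadratic forms of psd matrices. *)
Lemma psd_phi_ge0 a b : psd a -> psd b -> 0 <= phi b a.
Proof.
move=> [aH a_ge0] [bH b_ge0].
have a_normal : a \is normalmx.
  apply/hermitian_normalmx/is_hermitianmxP.
  by rewrite expr0 scale1r -map_trmx; exact: (esym aH).
have /orthomx_spectralP aE := a_normal.
set P := spectralmx a in aE; set d := spectral_diag a in aE.
have /unitarymxP PP' := spectral_unitarymx a.
rewrite -map_trmx -/(adjmx _) in PP'.
rewrite invmx_unitary ?spectral_unitarymx // -map_trmx -/(adjmx _) in aE.
have Dd : P *m a *m adjmx P = diag_mx d.
  by rewrite aE !mulmxA PP' mul1mx -mulmxA PP' mulmx1.
rewrite /phi bH aE !mulmxA mxtrace_mulC !mulmxA mul_mx_diag /mxtrace.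
apply: sumr_ge0 => k _; rewrite mxE; apply: mulr_ge0.
  by rewrite sesq_conj_row; apply: b_ge0.
have -> : d 0 k = diag_mx d k k by rewrite mxE eqxx mulr1n.
by rewrite -Dd sesq_conj_row; apply: a_ge0.
Qed.

End Positivity.

Arguments unitcv {R n} k.

Section Support.
Variables (R : realType) (n : nat) (Rel : rel 'I_n).
Hypotheses (reflR : reflexive Rel) (symR : symmetric Rel).
Local Notation C := R[i].
Local Notation T := (Tmap Rel).
Local Notation inA := (inA Rel).
Implicit Types a b d x : 'M[C]_n.

Lemma TmapE b i j : T b i j = if Rel i j then b i j else 0.
Proof. exact: mxE. Qed.

Lemma inA_Tmap b : inA (T b).
Proof. by move=> i j /negbTE Rij; rewrite TmapE Rij. Qed.

Lemma inA0 : inA (0 : 'M[C]_n).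
Proof. by move=> i j _; rewrite mxE. Qed.

Lemma inAD a b : inA a -> inA b -> inA (a + b).
Proof. by move=> aA bA i j Rij; rewrite mxE aA // bA // addr0. Qed.

Lemma inAZ c a : inA a -> inA (c *: a).
Proof. by move=> aA i j Rij; rewrite mxE aA // mulr0. Qed.

Lemma inAB a b : inA a -> inA b -> inA (a - b).
Proof. by move=> aA bA; rewrite -scaleN1r; apply/inAD/inAZ. Qed.

Lemma inA_delta i j : Rel i j -> inA (delta_mx i j : 'M[C]_n).
Proof.
move=> Rij k l; apply: contraNeq; rewrite mxE pnatr_eq0 eqb0 negbK.
by case/andP=> /eqP-> /eqP->.
Qed.

Lemma inA_sum (I : Type) (s : seq I) (F : I -> 'M[C]_n) :
  (forall i, inA (F i)) -> inA (\sum_(i <- s) F i).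
Proof. by move=> FA; elim/big_rec: _ => [|i a _ aA]; [apply: inA0 | apply: inAD]. Qed.

Lemma Tmap0 : T 0 = 0 :> 'M[C]_n.
Proof. by apply/matrixP => i j; rewrite !mxE if_same. Qed.

Lemma TmapD a b : T (a + b) = T a + T b.
Proof. by apply/matrixP => i j; rewrite !mxE; case: (Rel i j); rewrite ?addr0. Qed.

Lemma TmapZ c a : T (c *: a) = c *: T a.
Proof. by apply/matrixP => i j; rewrite !mxE; case: (Rel i j); rewrite ?mulr0. Qed.

Lemma phi_Tmapl b a : inA a -> phi (T b) a = phi b a.
Proof.
move=> aA; rewrite !phiE; apply: eq_bigr => i _; apply: eq_bigr => j _.
by rewrite TmapE; case: ifP => // /negbT /aA ->; rewrite !mulr0.
Qed.

Lemma phi_Tmapr b a : inA a -> phi a (T b) = phi a b.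
Proof. by move=> aA; rewrite phiC phi_Tmapl // -phiC. Qed.

Lemma adjmx_Tmap b : adjmx (T b) = T (adjmx b).
Proof.
apply/matrixP => i j; rewrite adjmxE !TmapE symR adjmxE.
by case: (Rel i j); rewrite ?rmorph0.
Qed.

Lemma inA_dyad_pair k l (c : C) :
  Rel k l -> inA (dyad (unitcv k + c *: unitcv l)).
Proof.
set w := _ + _ => Rkl i j; apply: contraNeq => wij.
have w_supp m : w m 0 != 0 -> (m == k) || (m == l).
  rewrite !mxE !andbT.
  by case: (m == k); case: (m == l); rewrite //= mulr0 addr0 eqxx.
have /andP[wi wj] : (w i 0 != 0) && (w j 0 != 0).
  by move: wij; rewrite /dyad mxE big_ord1 adjmxE mulf_eq0 conjC_eq0 negb_or.
by case/orP: (w_supp i wi) => /eqP->; case/orP: (w_supp j wj) => /eqP->;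
  rewrite ?reflR // symR.
Qed.

Lemma dual_ge0_herm x : inA x -> dual_ge0 Rel (phi x) -> adjmx x = x.
Proof.
move=> xA x_ge0.
have pair_ge0 k l c : Rel k l ->
    0 <= sesq x (unitcv k + c *: unitcv l) (unitcv k + c *: unitcv l).
  move=> Rkl; rewrite -conjC_ge0 -phi_dyad.
  by apply: x_ge0; [apply: inA_dyad_pair | apply: psd_dyad].
have diag_ge0 k : 0 <= x k k.
  by have := pair_ge0 k k 0 (reflR k); rewrite sesq_pair rmorph0 !mul0r !addr0.
apply/matrixP => k l; rewrite adjmxE.
have [Rlk|nRlk] := boolP (Rel l k); last by rewrite !xA ?rmorph0 // symR.
by apply: herm_pair; rewrite ?diag_ge0 ?pair_ge0.
Qed.

Section DualLinear.
Variable psi : 'M[C]_n -> C.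
Hypothesis psi_lin : dual_lin Rel psi.

Lemma dual_lin0 : psi 0 = 0.
Proof.
have := psi_lin 1 inA0 inA0; rewrite scaler0 addr0 mul1r => psi00.
by apply: (addrI (psi 0)); rewrite addr0 -psi00.
Qed.

Lemma dual_linZ c a : inA a -> psi (c *: a) = c * psi a.
Proof. by move=> aA; have := psi_lin c aA inA0; rewrite !addr0 dual_lin0 addr0. Qed.

Lemma dual_lin_sum (I : Type) (s : seq I) (F : I -> 'M[C]_n) :
  (forall i, inA (F i)) -> psi (\sum_(i <- s) F i) = \sum_(i <- s) psi (F i).
Proof.
move=> FA; elim: s => [|i s IHs]; first by rewrite !big_nil dual_lin0.
have := psi_lin 1 (FA i) (inA_sum s FA).
by rewrite !big_cons scale1r mul1r IHs.
Qed.

Lemma dual_lin_expand a : inA a ->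
  psi a = \sum_i \sum_j (if Rel i j then a i j * psi (delta_mx i j) else 0).
Proof.
move=> aA; have termA i j : inA (a i j *: delta_mx i j).
  have [Rij|/aA->] := boolP (Rel i j); first exact/inAZ/inA_delta.
  by rewrite scale0r; apply: inA0.
rewrite {1}(matrix_sum_delta a) dual_lin_sum => [|i]; last exact: inA_sum.
apply: eq_bigr => i _; rewrite dual_lin_sum //; apply: eq_bigr => j _.
have [Rij|/aA->] := boolP (Rel i j); first by rewrite dual_linZ //; apply: inA_delta.
by rewrite scale0r dual_lin0.
Qed.

End DualLinear.

Lemma phi_dual_lin x : dual_lin Rel (phi x).
Proof. by move=> c a b _ _; rewrite phiDr phiZr. Qed.

Lemma dual_lin_eq psi1 psi2 : dual_lin Rel psi1 -> dual_lin Rel psi2 ->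
  (forall i j, Rel i j -> psi1 (delta_mx i j) = psi2 (delta_mx i j)) ->
  forall a, inA a -> psi1 a = psi2 a.
Proof.
move=> lin1 lin2 eq12 a aA; rewrite !dual_lin_expand //.
by apply: eq_bigr => i _; apply: eq_bigr => j _; case: ifP => // /eq12->.
Qed.

End Support.

(* Heine-Borel is available for 'rV[R]_N, so a complex n x n matrix is
   encoded by the real parts of its entries followed by their imaginary parts. *)
Section Coordinates.
Variables (R : realType) (n : nat).
Local Notation C := R[i].
Local Notation N := (n * n + n * n)%N.

Definition mx_of_coord (w : 'rV[R]_N) : 'M[C]_n :=
  \matrix_(i, j) (w ord0 (lshift (n * n) (mxvec_index i j)) +i*
                  w ord0 (rshift (n * n) (mxvec_index i j)))%C.

Definition coord_of_mx (b : 'M[C]_n) : 'rV[R]_N :=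
  row_mx (mxvec (map_mx Re b)) (mxvec (map_mx Im b)).

Lemma coord_of_mxK : cancel coord_of_mx mx_of_coord.
Proof.
move=> b; apply/matrixP => i j; rewrite mxE row_mxEl row_mxEr !mxvecE !mxE.
by case: (b i j).
Qed.

Lemma mx_of_coord0 : mx_of_coord 0 = 0.
Proof. by apply/matrixP => i j; apply: complexP; rewrite !mxE. Qed.

Definition continuousC (F : 'rV[R]_N -> C) :=
  continuous (fun w => Re (F w)) /\ continuous (fun w => Im (F w)).

Lemma continuousC_entry i j : continuousC (fun w => mx_of_coord w i j).
Proof.
by split; [under eq_fun do rewrite mxE | under eq_fun do rewrite mxE];
  exact: coord_continuous.
Qed.

Lemma continuousC_cst c : continuousC (fun=> c).
Proof. by split; apply: cst_continuous. Qed.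

Lemma continuousC_add F G :
  continuousC F -> continuousC G -> continuousC (fun w => F w + G w).
Proof.
move=> [FRe FIm] [GRe GIm]; split.
  under eq_fun do rewrite complexReD.
  by move=> w; apply: continuousD; [exact: FRe | exact: GRe].
under eq_fun do rewrite complexImD.
by move=> w; apply: continuousD; [exact: FIm | exact: GIm].
Qed.

Lemma continuousC_mul F G :
  continuousC F -> continuousC G -> continuousC (fun w => F w * G w).
Proof.
move=> [FRe FIm] [GRe GIm]; split.
  have -> : (fun w => Re (F w * G w)) =
      (fun w => Re (F w) * Re (G w) - Im (F w) * Im (G w)).
    by apply/funext => w; rewrite complexReM.
  (* a bare [apply: continuousB] splits the difference at the wrong place *)
  move=> w; apply: (continuousB (f := fun w => Re (F w) * Re (G w)));
    apply: continuousM;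
    by [exact: FRe | exact: FIm | exact: GRe | exact: GIm].
have -> : (fun w => Im (F w * G w)) =
    (fun w => Re (F w) * Im (G w) + Im (F w) * Re (G w)).
  by apply/funext => w; rewrite complexImM.
move=> w; apply: (continuousD (f := fun w => Re (F w) * Im (G w)));
  apply: continuousM; by [exact: FRe | exact: FIm | exact: GRe | exact: GIm].
Qed.

Lemma continuousC_conj F : continuousC F -> continuousC (fun w => (F w)^*).
Proof.
move=> [FRe FIm]; split; first by under eq_fun do rewrite complexReJ.
by under eq_fun do rewrite complexImJ; move=> w; apply: continuousN; exact: FIm.
Qed.

Lemma continuousC_sum (I : Type) (s : seq I) (F : I -> 'rV[R]_N -> C) :
  (forall i, continuousC (F i)) -> continuousC (fun w => \sum_(i <- s) F i w).
Proof.
move=> Fc; elim: s => [|i s IHs].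
  by under eq_fun do rewrite big_nil; apply: continuousC_cst.
by under eq_fun do rewrite big_cons; apply: continuousC_add.
Qed.

Lemma closed_continuousC_ge0 F : continuousC F -> closed [set w | 0 <= F w].
Proof.
move=> [FRe FIm].
have -> : [set w | 0 <= F w] = [set w | Im (F w) = 0] `&` [set w | 0 <= Re (F w)].
  apply/seteqP; split=> w /=; rewrite complex_ge0E; first by case/andP=> /eqP.
  by case=> ImF ReF; rewrite ReF andbT; apply/eqP.
apply: closedI.
  by have := preimage_closed (D := [set r : R | r = 0]) (fun w _ => FIm w)
    (@closed_eq _ 0).
by have := preimage_closed (D := [set r : R | 0 <= r]) (fun w _ => FRe w)
  (@closed_ge _ 0).
Qed.

Lemma closed_psd : closed [set w | psd (mx_of_coord w)].
Proof.
have -> : [set w | psd (mx_of_coord w)] =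
    \bigcap_(v in [set: 'cV[C]_n]) [set w | 0 <= sesq (mx_of_coord w) v v].
  apply/seteqP; split=> w /=; first by move=> [_ b_ge0] v _; apply: b_ge0.
  by move=> w_ge0; apply: sesq_ge0_psd => v; apply: w_ge0.
apply: closed_bigI => v _; apply: closed_continuousC_ge0.
under eq_fun do rewrite sesqE.
do 2!(apply: continuousC_sum => ?); apply: continuousC_mul; last exact: continuousC_cst.
by apply: continuousC_mul; [apply: continuousC_cst | apply: continuousC_entry].
Qed.

End Coordinates.

Section Minimizer.
Variables (R : realType) (n : nat) (Rel : rel 'I_n).
Hypothesis reflR : reflexive Rel.
Variable x : 'M[R[i]]_n.
Local Notation N := (n * n + n * n)%N.
Local Notation T := (Tmap Rel).
Local Notation dist b := (hsnorm2 (T b - x)).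

(* T keeps the diagonal, so the diagonal of b is controlled by x, and it
   bounds the other entries of b. *)
Lemma psd_entry_bound_close b k l : psd b -> dist b <= hsnorm2 x ->
  `|Re (b k l)| <= 2 * (hsnorm2 x + 1) /\ `|Im (b k l)| <= 2 * (hsnorm2 x + 1).
Proof.
move=> b_psd b_close.
have diag_le m : Re (b m m) <= 2 * (hsnorm2 x + 1).
  have := hsnorm2_entry (T b - x) m m.
  rewrite !mxE reflR complexReD complexReN => bx_le.
  have := hsnorm2_entry x m m; have := hsnorm2_ge0 x.
  have := psd_diag_ge0 m b_psd; rewrite complex_ge0E => /andP[_ bmm_ge0].
  set u := Re (b m m) in bx_le bmm_ge0 *; set r := Re (x m m) in bx_le *.
  have := sqr_ge0 (u - r - 1); have := sqr_ge0 (r - 1); nra.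
have [ReB ImB] := psd_entry_bound k l b_psd.
have := diag_le k; have := diag_le l.
by split; [apply: le_trans ReB _ | apply: le_trans ImB _]; lra.
Qed.

Lemma continuous_dist : continuous (fun w => dist (mx_of_coord w)).
Proof.
suff : continuousC (fun w => phi (T (mx_of_coord w) - x) (T (mx_of_coord w) - x)).
  by case.
under eq_fun do rewrite phiE.
have entry i j : continuousC (fun w => (T (mx_of_coord w) - x) i j).
  have -> : (fun w => (T (mx_of_coord w) - x) i j) =
      (fun w => (if Rel i j then mx_of_coord w i j else 0) + - x i j).
    by apply/funext => w; rewrite !mxE.
  apply: continuousC_add; last exact: continuousC_cst.
  by case: (Rel i j); [apply: continuousC_entry | apply: continuousC_cst].
do 2!(apply: continuousC_sum => ?).
by apply: continuousC_mul; [apply: continuousC_conj |].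
Qed.

(* Matrices outside the compact box are farther from x than T 0 = 0 is. *)
Lemma exists_psd_minimizer :
  exists2 b0, psd b0 & forall b, psd b -> dist b0 <= dist b.
Proof.
pose M := 2 * (hsnorm2 x + 1).
have M_ge0 : 0 <= M by rewrite /M; have := hsnorm2_ge0 x; lra.
pose D := [set w : 'rV[R]_N | forall i, `[- M, M]%classic (w ord0 i)] `&`
          [set w | psd (mx_of_coord w)].
have D0 : D 0.
  split=> [i|] /=; last by rewrite mx_of_coord0; apply: psd0.
  by rewrite mxE in_itv /= oppr_le0 M_ge0.
have D_compact : compact D.
  apply: compact_closedI; last exact: closed_psd.
  by apply: (@rV_compact _ _ (fun=> `[- M, M]%classic)) => i; apply: segment_compact.
have [c Dc c_min] := EVT_min_rV (ex_intro _ 0 D0) D_compact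
  (continuous_subspaceT continuous_dist).
move: Dc; rewrite inE => -[_ c_psd].
exists (mx_of_coord c) => // b b_psd.
have dist0 : dist (mx_of_coord 0) = hsnorm2 x.
  by rewrite mx_of_coord0 Tmap0 sub0r /hsnorm2 phiNl phiNr opprK.
have [b_far|b_close] := ltP (hsnorm2 x) (dist b).
  by apply: le_trans (ltW b_far); rewrite -dist0; apply: c_min; rewrite inE.
suff Db : D (coord_of_mx b) by have := c_min _ (mem_set Db); rewrite coord_of_mxK.
split=> [i|] /=; last by rewrite coord_of_mxK.
rewrite -(splitK i); case: (fintype.split i) => k /=;
  [rewrite row_mxEl | rewrite row_mxEr]; case/mxvec_indexP: k => k l;
  rewrite mxvecE mxE in_itv /= -ler_norml;
  have [ReB ImB] := psd_entry_bound_close k l b_psd b_close; [exact: ReB | exact: ImB].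
Qed.

End Minimizer.

Lemma linear_coef_ge0 (R : realFieldType) (a b : R) :
  (forall t, 0 < t -> t < 1 -> 0 <= t * a + t ^+ 2 * b) -> 0 <= a.
Proof.
move=> ab_ge0; rewrite leNgt; apply/negP => a_lt0.
pose D := `|b| + 1 - a.
have b_le := ler_norm b; have nb_ge0 := normr_ge0 b.
have D_gt0 : 0 < D by rewrite /D; lra.
pose t := - a / D.
have tD : t * D = - a by rewrite /t mulrVK // unitfE gt_eqF.
have t_gt0 : 0 < t by rewrite /t divr_gt0 // oppr_gt0.
have t_lt1 : t < 1 by rewrite /t ltr_pdivrMr // mul1r /D; lra.
have := ab_ge0 t t_gt0 t_lt1; rewrite /D in tD; nra.
Qed.

Section Projection.
Variables (R : realType) (n : nat) (Rel : rel 'I_n).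
Hypotheses (reflR : reflexive Rel) (symR : symmetric Rel).
Local Notation C := R[i].
Local Notation T := (Tmap Rel).
Variables (x b0 : 'M[C]_n).
Hypothesis b0_psd : psd b0.
Hypothesis b0_min : forall b, psd b -> hsnorm2 (T b0 - x) <= hsnorm2 (T b - x).
Local Notation d := (T b0 - x).

Lemma minimizer_variational K :
  (forall t : R, 0 < t -> t < 1 -> exists2 c, psd c & T c - x = d + t%:C%C *: K) ->
  0 <= Re (phi d K).
Proof.
move=> dirK; suff : 0 <= 2 * Re (phi d K) by rewrite pmulr_rge0.
apply: (linear_coef_ge0 (b := hsnorm2 K)) => t t_gt0 t_lt1.
have [c c_psd cE] := dirK t t_gt0 t_lt1.
by have := b0_min c_psd; rewrite cE hsnorm2_line; lra.
Qed.

Lemma minimizer_psd : inA Rel x -> adjmx x = x -> psd d.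
Proof.
move=> xA xH; apply: psd_herm_Re => [|v].
  by rewrite adjmxD adjmxN adjmx_Tmap // b0_psd.1 xH.
have := minimizer_variational (K := T (dyad v)).
rewrite phi_Tmapr ?phi_dyad ?complexReJ; last exact/inAB/xA/inA_Tmap.
apply=> t t_gt0 _; exists (b0 + t%:C%C *: dyad v).
  by apply/psdD/psdZ/psd_dyad => //; apply: ltW.
by rewrite TmapD TmapZ addrAC.
Qed.

Lemma minimizer_orth : Re (phi d (T b0)) = 0.
Proof.
apply/eqP; rewrite eq_le -oppr_ge0 -complexReN -phiNr andbC.
apply/andP; split; apply: minimizer_variational => t t_gt0 t_lt1.
  exists (b0 + t%:C%C *: b0); first by apply/psdD/psdZ => //; apply: ltW.
  by rewrite TmapD TmapZ addrAC.
exists ((1 - t)%:C%C *: b0); first by apply: psdZ => //; rewrite subr_ge0 ltW.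
have -> : (1 - t)%:C%C = 1 - t%:C%C :> C by apply: complexP; rewrite /= ?subr0.
by rewrite TmapZ scalerBl scale1r scalerN addrAC.
Qed.

End Projection.

Lemma dual_ge0_succeq0 (R : realType) (n : nat) (Rel : rel 'I_n) (x : 'M[R[i]]_n) :
  reflexive Rel -> symmetric Rel ->
  inA Rel x -> dual_ge0 Rel (phi x) -> succeq0 Rel x.
Proof.
move=> reflR symR xA x_ge0.
have [b0 b0_psd b0_min] := exists_psd_minimizer reflR x.
have dA : inA Rel (Tmap Rel b0 - x) by apply/inAB/xA/inA_Tmap.
have xH := dual_ge0_herm reflR symR xA x_ge0.
have d_psd := minimizer_psd symR b0_psd b0_min xA xH.
suff /hsnorm2_le0/eqP : hsnorm2 (Tmap Rel b0 - x) <= 0.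
  by rewrite subr_eq0 => /eqP <-; exists b0.
rewrite /hsnorm2 phiDr phiNr complexReD complexReN.
rewrite (minimizer_orth b0_psd b0_min) (phiC x) complexReJ sub0r oppr_le0.
by have := x_ge0 _ dA d_psd; rewrite complex_ge0E => /andP[].
Qed.

Theorem proposition4p5 (R : realType) (n : nat) (Rel : rel 'I_n) :
  tolerance Rel ->
  [/\ (* the map x |-> phi_x|_A lands in A^* *)
      (forall x : 'M[R[i]]_n, inA Rel x -> dual_lin Rel (phi x)),
      (* it is R-linear *)
      (forall (r : R[i]) (x y : 'M[R[i]]_n), r \is Num.real ->
         inA Rel x -> inA Rel y ->
         forall a, inA Rel a -> phi (r *: x + y) a = r * phi x a + phi y a),
      (* injective on A (functionals on A compared by their values on A) *)
      (forall x y : 'M[R[i]]_n, inA Rel x -> inA Rel y ->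
         (forall a, inA Rel a -> phi x a = phi y a) -> x = y),
      (* surjective onto A^* *)
      (forall psi : 'M[R[i]]_n -> R[i], dual_lin Rel psi ->
         exists2 x, inA Rel x & forall a, inA Rel a -> phi x a = psi a)
    & (* order isomorphism *)
      (forall x : 'M[R[i]]_n, inA Rel x ->
         (succeq0 Rel x <-> dual_ge0 Rel (phi x)))].
Proof.
move=> [reflR symR]; split.
- by move=> x _; apply: phi_dual_lin.
- by move=> r x y r_real _ _ a _; rewrite phiDl phiZl conj_Creal.
- move=> x y xA yA xy; apply/matrixP => i j.
  have [Rij|nRij] := boolP (Rel i j); last by rewrite xA // yA.
  by apply: (can_inj conjCK); rewrite -!phi_delta xy //; apply: inA_delta.
- move=> psi psi_lin.
  exists (\matrix_(i, j) if Rel i j then (psi (delta_mx i j))^* else 0).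
    by move=> i j /negbTE nRij; rewrite mxE nRij.
  apply: dual_lin_eq => [||i j Rij]; [exact: phi_dual_lin | exact: psi_lin |].
  by rewrite phi_delta mxE Rij conjCK.
- move=> x xA; split; last exact: dual_ge0_succeq0.
  by move=> [b b_psd ->] a aA a_psd; rewrite phi_Tmapl //; apply: psd_phi_ge0.
Qed.
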